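(* Every connected $4$-regular graph of order at least $7$ has a foresty minimum vertex cut.
   Context: All graphs are finite and simple. A vertex cut of a connected graph $G$ is a set $S\subset V(G)$ such that $G-S$ is disconnected. If $G$ has connectivity $k$, a vertex cut $S$ is called minimum if $|S|=k$. A vertex cut $S$ is called a foresty vertex cut if the induced subgraph $G[S]$ is a forest. *)

(* A simple graph = symmetric irreflexive relation e on a finType T. *)
From mathcomp Require Import all_boot.
Set Implicit Arguments. Unset Strict Implicit. Unset Printing Implicit Defensive.

Section Graphs.
Variables (T : finType) (e : rel T).

Definition connected_graph : Prop := forall x y : T, connect e x y.

Definition regular (k : nat) : Prop := forall x : T, #|[set y | e x y]| = k.

Definition del_rel (S : {set T}) : rel T :=
  [rel u v | [&& e u v, u \notin S & v \notin S]].

Definition vertex_cut (S : {set T}) : Prop :=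
  exists x y : T, [/\ x \notin S, y \notin S & ~~ connect (del_rel S) x y].

Definition minimum_vertex_cut (S : {set T}) : Prop :=
  vertex_cut S /\ forall S' : {set T}, vertex_cut S' -> #|S| <= #|S'|.

Definition induced_forest (S : {set T}) : Prop :=
  ~ exists p : seq T, [/\ uniq p, 3 <= size p, {subset p <= S} & cycle e p].

Definition foresty_vertex_cut (S : {set T}) : Prop :=
  vertex_cut S /\ induced_forest S.

End Graphs.

From mathcomp Require Import all_boot zify.
From Stdlib Require Import Classical.

Set Implicit Arguments. Unset Strict Implicit. Unset Printing Implicit Defensive.

(* Take a minimum vertex cut S; as every neighbourhood is a cut, |S| <= 4.
   If G[S] contains a cycle, split G - S into sides C and R with |C| >= 2.
   Minimality gives every s in S a neighbour on both sides, so by 4-regularity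
   a vertex s of the cycle, having two neighbours in S, has exactly one
   neighbour a in C. Then S' = S - s + a is again a minimum cut (with sides C - a and R + s),
   and G[S'] is a forest: a cycle through a would pass through a second
   vertex t of the old cycle adjacent to a, and S - s - t + a would be a
   smaller cut; a cycle avoiding a would fill S - s, giving the cycle
   neighbour of s three neighbours in S. *)

Lemma uniq_size_le_card (T : finType) (A : {set T}) (p : seq T) :
  uniq p -> {subset p <= A} -> size p <= #|A|.
Proof. by move=> up pA; rewrite -(card_uniqP up); apply/subset_leq_card/subsetP. Qed.

Lemma uniq_subset_meets_pair (T : finType) (A : {set T}) (p : seq T) x y :
  #|A| < (size p).+2 -> uniq p -> {subset p <= A} ->
  x \in A -> y \in A -> x != y -> (x \in p) || (y \in p).
Proof.
move=> small up pA xA yA xy; apply/negPn/negP; rewrite negb_or => /andP[xp yp].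
have: size [:: x, y & p] <= #|A|.
  apply: uniq_size_le_card; first by rewrite /= !inE negb_or xy xp yp up.
  by move=> z; rewrite !inE => /or3P[/eqP->|/eqP->|/pA].
by rewrite leqNgt small.
Qed.

Section VertexCuts.
Variables (T : finType) (e : rel T).
Hypotheses (e_sym : symmetric e) (e_irr : irreflexive e).

Definition nbhd (v : T) : {set T} := [set w | e v w].

Lemma cycle_neighbours (q : seq T) v : uniq q -> 2 < size q -> cycle e q ->
  v \in q -> exists u w, [/\ u \in q, w \in q, u != w, e v u & e v w].
Proof.
move=> uq sq cq vq; case: (rot_to vq) => i s' rq.
have uq' : uniq (v :: s') by rewrite -rq rot_uniq.
have cq' : cycle e (v :: s') by rewrite -rq rot_cycle.
have sq' : 2 < size (v :: s') by rewrite -rq size_rot.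
have mq z : z \in v :: s' -> z \in q by rewrite -rq mem_rot.
move: uq' cq' sq' mq; case: s' {rq} => [|y [|z r]] //= uq' cq' _ mq.
move: cq'; rewrite rcons_path /= => /and4P[evy _ _ elv].
exists y, (last z r); split.
- by apply: mq; rewrite !inE eqxx orbT.
- by apply: mq; rewrite (in_cons v) (in_cons y) mem_last !orbT.
- by case/and3P: uq' => _ yn _; apply: contraNneq yn => ->; rewrite mem_last.
- exact: evy.
- by rewrite e_sym.
Qed.

Record separation (S C R : {set T}) : Prop := Separation {
  separation_cover : forall v, [|| v \in S, v \in C | v \in R];
  separation_SC : forall v, v \in S -> v \in C -> False;
  separation_SR : forall v, v \in S -> v \in R -> False;
  separation_CR : forall v, v \in C -> v \in R -> False;
  separation_C0 : exists c, c \in C;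
  separation_R0 : exists r, r \in R;
  separation_noedge : forall u v, u \in C -> v \in R -> ~~ e u v }.

Variant separation_spec (v : T) : bool -> bool -> bool -> Prop :=
  | SeparationS : separation_spec v true false false
  | SeparationC : separation_spec v false true false
  | SeparationR : separation_spec v false false true.

Lemma separationP S C R v :
  separation S C R -> separation_spec v (v \in S) (v \in C) (v \in R).
Proof.
case=> cov dSC dSR dCR _ _ _; have := cov v.
case vS: (v \in S); case vC: (v \in C); case vR: (v \in R) => // _;
  by [constructor | case: (dSC v) | case: (dSR v) | case: (dCR v)].
Qed.

Lemma separation_sym S C R : separation S C R -> separation S R C.
Proof.
move=> sp; have [_ _ _ _ C0 R0 noe] := sp.
split=> // [v|v|v|v|u v uR vC]; try by case: (separationP v sp).
by rewrite e_sym noe.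
Qed.

Lemma separation_vertex_cut S C R : separation S C R -> vertex_cut e S.
Proof.
move=> sp; have [_ _ _ _ [c cC] [r rR] noe] := sp.
have [cS rS] : c \notin S /\ r \notin S.
  by split; [move: cC | move: rR]; case: (separationP _ sp).
exists c, r; split=> //; apply/negP => /connectP[p pth lst].
suff: last c p \in C by rewrite -lst; case: (separationP r sp) rR.
elim: p c cC {cS} pth {lst} => [|x p IH] c cC //= /andP[/and3P[ecx _ xS] pth].
apply: IH pth.
by case: (separationP x sp) xS ecx (noe c x cC) => // _ -> /(_ isT).
Qed.

Lemma vertex_cut_separation S : vertex_cut e S -> exists C R, separation S C R.
Proof.
case=> x [y [xS yS nxy]].
exists [set z | (z \notin S) && connect (del_rel e S) x z].
exists [set z | (z \notin S) && ~~ connect (del_rel e S) x z]; split.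
- by move=> v; rewrite !inE; case: (v \in S); case: connect.
- by move=> v vS; rewrite inE vS.
- by move=> v vS; rewrite inE vS.
- by move=> v; rewrite !inE => /andP[_ ->] /andP[_].
- by exists x; rewrite inE xS connect0.
- by exists y; rewrite inE yS nxy.
move=> u v; rewrite !inE => /andP[uS xu] /andP[vS]; apply: contra => euv.
by apply: connect_trans xu (connect1 _); rewrite /del_rel /= euv uS vS.
Qed.

Lemma card_separation S C R (A : {set T}) : separation S C R ->
  #|A| = #|A :&: S| + #|A :&: C| + #|A :&: R|.
Proof.
move=> sp; rewrite -(cardsID S A) -addnA; congr (_ + _).
rewrite -(cardsID C (A :\: S)); congr (_ + _); apply: eq_card => v; rewrite !inE;
  by case: (separationP v sp); case: (v \in A).
Qed.

Lemma separation_move S C R (X A : {set T}) :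
  separation S C R -> X \subset S -> A \subset C -> (exists c, c \in C :\: A) ->
  (forall x c, x \in X -> c \in C -> e x c -> c \in A) ->
  separation (A :|: (S :\: X)) (C :\: A) (X :|: R).
Proof.
move=> sp /subsetP XS /subsetP AC C0 XA; have [_ _ _ _ _ [r rR] noe] := sp.
have memXA v : ((v \in X) ==> (v \in S)) && ((v \in A) ==> (v \in C)).
  by apply/andP; split; apply/implyP; [apply: XS | apply: AC].
split=> // [|||||u v]; try by move=> v; rewrite !inE; move: (memXA v);
  case: (separationP v sp); case: (v \in X); case: (v \in A).
  by exists r; rewrite inE rR orbT.
rewrite !inE => /andP[uA uC] /orP[vX|]; last exact: noe.
by apply: contraNN uA => euv; apply: XA vX uC _; rewrite e_sym.
Qed.

Lemma card_move S C R (X A : {set T}) : separation S C R ->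
  X \subset S -> A \subset C -> #|A :|: (S :\: X)| = #|A| + (#|S| - #|X|).
Proof.
move=> sp XS /subsetP AC; rewrite cardsU cardsD (setIidPr XS).
suff -> : A :&: (S :\: X) = set0 by rewrite cards0 subn0.
apply/setP => v; rewrite !inE; have := AC v.
by case: (separationP v sp); case: (v \in A); case: (v \in X) => // /(_ isT).
Qed.

Section MinimumCut.
Variables (S C R : {set T}).
Hypotheses (mS : minimum_vertex_cut e S) (sp : separation S C R).

Lemma minimum_cut_move (X A : {set T}) :
  X \subset S -> A \subset C -> (exists c, c \in C :\: A) ->
  (forall x c, x \in X -> c \in C -> e x c -> c \in A) -> #|X| <= #|A|.
Proof.
move=> XS AC C0 XA.
have := mS.2 _ (separation_vertex_cut (separation_move sp XS AC C0 XA)).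
by rewrite (card_move sp XS AC); have := subset_leq_card XS; lia.
Qed.

Lemma minimum_cut_neighbour s : s \in S -> 0 < #|nbhd s :&: C|.
Proof.
move=> sS; rewrite lt0n; apply/negP => /eqP/cards0_eq none.
have [c cC] := separation_C0 sp.
suff: #|[set s]| <= #|@set0 T| by rewrite cards1 cards0.
apply: minimum_cut_move; rewrite ?sub1set ?sub0set //.
  by exists c; rewrite setD0.
by move=> x c'; rewrite inE => /eqP-> c'C esc'; rewrite -none !inE esc'.
Qed.

End MinimumCut.

Lemma minimum_cut_degree S C R k v : minimum_vertex_cut e S -> separation S C R ->
  regular e k -> v \in S -> #|nbhd v :&: S| + #|nbhd v :&: C| < k.
Proof.
move=> mS sp reg vS; rewrite -(reg v) (card_separation (nbhd v) sp).
have := minimum_cut_neighbour mS sp vS.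
have := minimum_cut_neighbour mS (separation_sym sp) vS; lia.
Qed.

Lemma nbhd_vertex_cut k x : regular e k -> k.+1 < #|T| -> vertex_cut e (nbhd x).
Proof.
move=> reg large; have Nk : #|nbhd x| = k := reg x.
have /card_gt0P[y yN] : 0 < #|~: (x |: nbhd x)|.
  by have := cardsC (x |: nbhd x); rewrite cardsU1 Nk; lia.
apply: (@separation_vertex_cut _ [set x] (~: (x |: nbhd x))); split.
- by move=> v; rewrite !inE; case: (v == x); case: (e x v).
- by move=> v; rewrite !inE => exv /eqP vx; rewrite vx e_irr in exv.
- by move=> v; rewrite !inE => ->; rewrite orbT.
- by move=> v; rewrite !inE => ->.
- by exists x; rewrite inE.
- by exists y.
by move=> u v; rewrite !inE => /eqP->; rewrite negb_or => /andP[_].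
Qed.

Definition vertex_cutb (S : {set T}) : bool :=
  [exists x, exists y, [&& x \notin S, y \notin S & ~~ connect (del_rel e S) x y]].

Lemma vertex_cutP S : reflect (vertex_cut e S) (vertex_cutb S).
Proof.
apply: (iffP existsP) => [[x /existsP[y /and3P[xS yS nxy]]]|[x [y [xS yS nxy]]]].
  by exists x, y.
by exists x; apply/existsP; exists y; rewrite xS yS nxy.
Qed.

Lemma exists_minimum_vertex_cut S0 : vertex_cut e S0 ->
  exists S, minimum_vertex_cut e S.
Proof.
move/vertex_cutP => cut0; case: (arg_minnP (fun S : {set T} => #|S|) cut0).
move=> S /vertex_cutP cutS minS; exists S; split=> // S' /vertex_cutP.
exact: minS.
Qed.

End VertexCuts.

Section Exchange.
Variables (T : finType) (e : rel T).
Hypotheses (e_sym : symmetric e) (e_irr : irreflexive e) (reg : regular e 4).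
Variables (S C R : {set T}) (q : seq T).
Hypotheses (mS : minimum_vertex_cut e S) (sp : separation e S C R).
Hypotheses (C2 : 1 < #|C|) (S4 : #|S| <= 4).
Hypotheses (uq : uniq q) (q3 : 2 < size q) (qS : {subset q <= S}) (cq : cycle e q).

Lemma cycle_vertex_degree v : v \in q -> 2 <= #|nbhd e v :&: S|.
Proof.
move=> vq; have [u [w [uq' wq uw evu evw]]] := cycle_neighbours e_sym uq q3 cq vq.
apply: (@uniq_size_le_card _ _ [:: u; w]); first by rewrite /= inE uw.
by move=> x; rewrite !inE => /orP[]/eqP->; rewrite ?evu ?evw qS.
Qed.

Lemma cycle_vertex_C_neighbour v c c' : v \in q -> c \in C -> c' \in C ->
  e v c -> e v c' -> c = c'.
Proof.
move=> vq cC c'C evc evc'.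
have: #|nbhd e v :&: C| <= 1.
  have := minimum_cut_degree e_sym mS sp reg (qS vq).
  have := cycle_vertex_degree vq; lia.
by move/card_le1_eqP; apply; rewrite !inE ?evc ?evc' ?cC ?c'C.
Qed.

Section ExchangeVertex.
Variables (s a : T).
Hypotheses (s_q : s \in q) (aC : a \in C) (esa : e s a).

Lemma C_minus_a_nonempty : exists c, c \in C :\ a.
Proof.
have: 0 < #|C :\ a| by move: C2; rewrite (cardsD1 a C) aC.
by case/card_gt0P => c cCa; exists c.
Qed.

Lemma exchange_separation : separation e (a |: (S :\ s)) (C :\ a) (s |: R).
Proof.
apply: separation_move; rewrite ?sub1set ?qS ?aC //.
  exact: C_minus_a_nonempty.
move=> x c; rewrite !inE => /eqP-> cC esc.
by rewrite (cycle_vertex_C_neighbour s_q cC aC esc esa).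
Qed.

Lemma exchange_minimum : minimum_vertex_cut e (a |: (S :\ s)).
Proof.
split; first exact: separation_vertex_cut exchange_separation.
move=> S' cutS'; rewrite (card_move sp) ?sub1set ?qS ?aC // !cards1.
have := mS.2 _ cutS'; have: 0 < #|S| by apply/card_gt0P; exists s; apply: qS.
lia.
Qed.

Lemma cut_minus_cycle_vertex_forest : induced_forest e (S :\ s).
Proof.
move=> [p [up p3 pS cp]].
have pS0 x : x \in p -> x \in S by move/pS/setD1P=> [].
have s_p : s \notin p by apply/negP => /pS; rewrite !inE eqxx.
have [u [_ [u_q _ _ esu _]]] := cycle_neighbours e_sym uq q3 cq s_q.
have us : u != s by apply: contraTneq esu => ->; rewrite e_irr.
have uS := qS u_q.
have u_p : u \in p.
  have small : #|S| < (size p).+2 by apply: leq_ltn_trans S4 _.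
  have := uniq_subset_meets_pair small up pS0 uS (qS s_q) us.
  by rewrite (negbTE s_p) orbF.
have [w1 [w2 [w1p w2p w12 euw1 euw2]]] := cycle_neighbours e_sym up p3 cp u_p.
have: 3 <= #|nbhd e u :&: S|.
  apply: (@uniq_size_le_card _ _ [:: s; w1; w2]).
    by rewrite /= !inE negb_or w12 !andbT; apply/andP; split;
      apply: contraNneq s_p => ->.
  move=> x; rewrite !inE => /or3P[]/eqP->; rewrite ?(e_sym u s) ?esu ?euw1 ?euw2.
  - exact: qS.
  - exact: pS0.
  - exact: pS0.
move=> u_deg; have := minimum_cut_degree e_sym mS sp reg uS.
rewrite ltnNge => /negP; apply.
exact: leq_add u_deg (minimum_cut_neighbour e_sym mS sp uS).
Qed.

Lemma exchange_cycle_avoids_a (p : seq T) : uniq p -> 2 < size p ->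
  {subset p <= a |: (S :\ s)} -> cycle e p -> a \notin p.
Proof.
move=> up p3 pS cp; apply/negP => a_p.
have [u [w [u_p w_p uw eau eaw]]] := cycle_neighbours e_sym up p3 cp a_p.
have inS x : x \in p -> e a x -> x \in S :\ s.
  move=> xp eax; move: (pS x xp); rewrite !inE => /orP[/eqP xa|//].
  by rewrite xa e_irr in eax.
have [t [t_q ts eat]] : exists t, [/\ t \in q, t != s & e a t].
  have small : #|S| < (size q).+2 by apply: leq_ltn_trans S4 _.
  have /setD1P[us uS] := inS _ u_p eau; have /setD1P[ws wS] := inS _ w_p eaw.
  have := uniq_subset_meets_pair small uq qS uS wS uw.
  by case/orP => ?; [exists u | exists w].
suff: #|[set s; t]| <= #|[set a]| by rewrite cards2 cards1 eq_sym ts.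
apply: (minimum_cut_move e_sym mS sp); rewrite ?subUset ?sub1set ?qS ?aC //.
  exact: C_minus_a_nonempty.
move=> x c; rewrite !inE => /orP[]/eqP-> cC exc; apply/eqP.
  exact: cycle_vertex_C_neighbour s_q cC aC exc esa.
by apply: cycle_vertex_C_neighbour t_q cC aC exc _; rewrite e_sym.
Qed.

Lemma exchange_forest : induced_forest e (a |: (S :\ s)).
Proof.
move=> [p [up p3 pS cp]]; have ap := exchange_cycle_avoids_a up p3 pS cp.
apply: cut_minus_cycle_vertex_forest; exists p; split=> // x xp.
by move: (pS x xp); rewrite !inE => /orP[/eqP xa|//]; rewrite -xa xp in ap.
Qed.

End ExchangeVertex.

Lemma cycle_cut_exchange :
  exists S', minimum_vertex_cut e S' /\ foresty_vertex_cut e S'.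
Proof.
have [s s_q] : exists s, s \in q by case: (q) q3 => [|s ?] // _; exists s; rewrite inE eqxx.
have /card_gt0P[a] := minimum_cut_neighbour e_sym mS sp (qS s_q).
rewrite !inE => /andP[esa aC]; have mS' := exchange_minimum s_q aC esa.
by exists (a |: (S :\ s)); split=> //; split; [case: mS' | exact: exchange_forest].
Qed.

End Exchange.

Theorem lemma9 (T : finType) (e : rel T)
  (e_sym : symmetric e) (e_irr : irreflexive e)
  (Hconn : connected_graph e) (Hreg : regular e 4) (Horder : 7 <= #|T|) :
  exists S : {set T}, minimum_vertex_cut e S /\ foresty_vertex_cut e S.
Proof.
have /card_gt0P[x _] : 0 < #|T| by apply: leq_trans Horder.
have cutN := nbhd_vertex_cut e_irr x Hreg (ltnW Horder).
have [S mS] := exists_minimum_vertex_cut cutN.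
have S4 : #|S| <= 4 by rewrite -(Hreg x); exact: mS.2 _ cutN.
have [[q [uq q3 qS cq]]|forest] :=
  classic (exists q, [/\ uniq q, 3 <= size q, {subset q <= S} & cycle e q]).
  have [C [R sp]] := vertex_cut_separation mS.1.
  have := card_separation [set: T] sp; rewrite !setTI cardsT => cardT.
  have [C1|C2] := leqP #|C| 1; last first.
    exact: (cycle_cut_exchange e_sym e_irr Hreg mS sp C2 S4 uq q3 qS cq).
  apply: (cycle_cut_exchange e_sym e_irr Hreg mS (separation_sym e_sym sp) _ S4 uq q3 qS cq).
  by move: cardT; clear -Horder S4 C1; lia.
by exists S; split=> //; split; [case: mS|].
Qed.
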